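(* Let $\ell\geq 1$ be an integer. There is a constant $\sigma_\ell$ depending only on $\ell$ such that for every integer $s\geq 0$ and every $\mathbf{a}=(a_0,\ldots,a_\ell)\in\mathbb{R}^{\ell+1}$ the matrix $A_{s,\mathbf{a}}\in M_{\ell+1}(\mathbb{R})$ with entries \[ (A_{s,\mathbf{a}})_{ij}=\big((i-1)(\ell+1)+j\big)^{\ell-1}\quad (1\leq i\leq \ell,\ 1\leq j\leq \ell+1),\qquad (A_{s,\mathbf{a}})_{\ell+1,j}=(j-1)^s a_{j-1}\quad (1\leq j\leq \ell+1) \] satisfies \[ \det(A_{s,\mathbf{a}})=\sigma_\ell\sum_{j=0}^{\ell}(-1)^j\binom{\ell}{j} j^s a_j . \]
   Context: The convention $0^0=1$ is used. *)

From HB Require Import structures.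
From mathcomp Require Import all_boot all_order all_algebra.
From mathcomp Require Import reals.
Set Implicit Arguments. Unset Strict Implicit. Unset Printing Implicit Defensive.
Import Order.TTheory GRing.Theory Num.Theory.
Local Open Scope ring_scope.

(* The matrix A_{s,a} in M_{l+1}(R), with 0-based indices i, j : 'I_(l+1).
   Paper row i+1 <= l, column j+1: ((i)(l+1) + (j+1))^(l-1).
   Last row (i = l): j^s * a_j  (with 0^0 = 1, as x ^+ 0 = 1 in MathComp). *)
Definition Amat (R : realType) (l s : nat) (a : 'I_l.+1 -> R) : 'M[R]_(l.+1) :=
  \matrix_(i < l.+1, j < l.+1)
    if (i < l)%N then ((i * l.+1 + j.+1)%N%:R) ^+ (l.-1)
    else (j%:R) ^+ s * a j.

From HB Require Import structures.
From mathcomp Require Import all_boot all_order all_algebra.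
From mathcomp Require Import reals ring.
Import Order.TTheory GRing.Theory Num.Theory.

Set Implicit Arguments.
Unset Strict Implicit.
Unset Printing Implicit Defensive.

Local Open Scope ring_scope.

(* Expanding along the last row, det A_{s,a} = sum_j x_j C_j with x_j = j^s a_j
   and cofactors C_j that do not depend on x. Each of the first l rows is
   j |-> (c + j)^(l-1), a polynomial of degree < l in j, so it is annihilated
   by the l-th finite difference weights w_j = (-1)^j binom(l, j). Hence
   whenever sum_j w_j x_j = 0 the nonzero vector w lies in the kernel and the
   determinant vanishes; taking x = e_j - w_j e_0 gives C_j = w_j C_0, so
   sigma_l = C_0. *)

Lemma sum_alt_binomial_exprD (R : comPzRingType) (m l : nat) (c : R) :
  (m < l)%N -> \sum_(j < l.+1) (-1) ^+ j * 'C(l, j)%:R * (c + j%:R) ^+ m = 0.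
Proof.
elim: m l c => [|m IHm] [|l] c //= lt_ml.
  have := exprD1n (-1 : R) l.+1; rewrite addNr expr0n /= => /esym sum_eq0.
  rewrite -[RHS]sum_eq0; apply: eq_bigr => j _.
  by rewrite expr0 mulr1 mulr_natr.
pose t n j (x : R) : R := (-1) ^+ j * 'C(n, j)%:R * (x + j%:R) ^+ m.
have sum_t_eq0 n x : (m < n)%N -> \sum_(j < n.+1) t n j x = 0 := IHm n x.
have splitS j : (-1) ^+ j * 'C(l.+1, j)%:R * (c + j%:R) ^+ m.+1
    = c * t l.+1 j c + j%:R * t l.+1 j c.
  by rewrite /t exprS; ring.
have absorb j : j.+1%:R * t l.+1 j.+1 c = - l.+1%:R * t l j (c + 1).
  have /(congr1 (fun n => n%:R : R)) := mul_bin_diag l.+1 j.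
  rewrite /t !natrM -addrA [1 + _]addrC natr1 /= => bin_eq.
  transitivity (- ((-1) ^+ j * (c + j.+1%:R) ^+ m)
                * (j.+1%:R * 'C(l.+1, j.+1)%:R)).
    by rewrite exprS; ring.
  by rewrite -bin_eq; ring.
rewrite (eq_bigr _ (fun (j : 'I_l.+2) _ => splitS j)) big_split /=.
rewrite -mulr_sumr sum_t_eq0 ?(ltnW lt_ml) // mulr0 add0r.
rewrite big_ord_recl mul0r add0r (eq_bigr _ (fun (j : 'I_l.+1) _ => absorb j)).
by rewrite -mulr_sumr sum_t_eq0 // mulr0.
Qed.

Lemma cofactor_row'_eq (R : comPzRingType) n (A B : 'M[R]_n) i j :
  row' i A = row' i B -> cofactor A i j = cofactor B i j.
Proof.
move=> /matrixP eqAB; rewrite /cofactor; congr (_ * \det _).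
by apply/matrixP => k k'; have := eqAB k (lift j k'); rewrite !mxE.
Qed.

Lemma sum_delta_mul (R : pzSemiRingType) (I : finType) (i : I) (F : I -> R) :
  \sum_k (k == i)%:R * F k = F i.
Proof.
under eq_bigr do rewrite mulr_natl mulrb.
by rewrite -big_mkcond big_pred1_eq.
Qed.

Section LastRow.
Variables (R : fieldType) (l : nat).

Definition Alast (x : 'I_l.+1 -> R) : 'M[R]_l.+1 :=
  \matrix_(i < l.+1, j < l.+1)
    if (i < l)%N then ((i * l.+1 + j.+1)%N%:R) ^+ l.-1 else x j.

Definition Acof (j : 'I_l.+1) : R := cofactor (Alast (fun=> 0)) ord_max j.

Definition altbin (j : 'I_l.+1) : R := (-1) ^+ j * 'C(l, j)%:R.

Lemma det_Alast x : \det (Alast x) = \sum_j x j * Acof j.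
Proof.
rewrite (expand_det_row _ ord_max); apply: eq_bigr => j _.
rewrite mxE ltnn; congr (_ * _); apply: cofactor_row'_eq.
by apply/matrixP => k k'; rewrite !mxE lift_max ltn_ord.
Qed.

Hypothesis l_gt0 : (0 < l)%N.

Lemma det_Alast_eq0 {x} : \sum_j altbin j * x j = 0 -> \det (Alast x) = 0.
Proof.
move=> x_orth; rewrite -det_tr; apply/eqP/det0P; exists (\row_j altbin j).
  apply/eqP => /rowP /(_ ord0) /eqP.
  by rewrite !mxE /altbin bin0 mulr1 oner_eq0.
apply/rowP => i; rewrite !mxE; under eq_bigr do rewrite !mxE.
have [i_lt_l | _] := boolP (i < l)%N; last exact: x_orth.
rewrite -[RHS](@sum_alt_binomial_exprD _ l.-1 l (i * l.+1).+1%:R) ?prednK //.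
by apply: eq_bigr => j _; rewrite -natrD addSnnS.
Qed.

Lemma Acof_altbin j : Acof j = altbin j * Acof ord0.
Proof.
pose x k := (k == j)%:R - altbin j * (k == ord0)%:R.
have sum_x F : \sum_k x k * F k = F j - altbin j * F ord0.
  under eq_bigr do rewrite mulrBl -mulrA.
  by rewrite sumrB -mulr_sumr !sum_delta_mul.
have x_orth : \sum_k altbin k * x k = 0.
  under eq_bigr do rewrite mulrC.
  by rewrite sum_x [altbin ord0]/altbin bin0 expr0 !mulr1 subrr.
have /eqP := det_Alast_eq0 x_orth.
by rewrite det_Alast (sum_x Acof) subr_eq0 => /eqP.
Qed.

End LastRow.

Theorem proposition1 (R : realType) (l : nat) (hl : (1 <= l)%N) :
  exists sigma : R, forall (s : nat) (a : 'I_l.+1 -> R),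
    \det (Amat s a) =
    sigma * \sum_(j < l.+1) (-1) ^+ j * ('C(l, j))%:R * (j%:R) ^+ s * a j.
Proof.
exists (@Acof R l ord0) => s a.
rewrite (_ : Amat s a = Alast (fun j => j%:R ^+ s * a j)) //.
rewrite det_Alast mulr_sumr.
by apply: eq_bigr => j _; rewrite Acof_altbin // /altbin; ring.
Qed.
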